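(* For any real numbers $G_2,G_3$ with $G_2\neq0$ and $G_2^3-27G_3^2>0$, the polynomial $K^4-G_2K^2/2-G_3K-G_2^2/48$ has one real negative root, one real positive root, and two non-real complex conjugate roots. *)

From mathcomp Require Import all_boot all_order all_algebra.
From mathcomp Require Export complex.
Set Implicit Arguments. Unset Strict Implicit. Unset Printing Implicit Defensive.
Import Order.TTheory GRing.Theory Num.Theory.
Local Open Scope ring_scope.

Definition quartic (R : fieldType) (G2 G3 : R) : {poly R} :=
  'X^4 - (G2 / 2%:R) *: 'X^2 - G3 *: 'X - (G2 ^+ 2 / 48%:R)%:P.

From mathcomp Require Import all_boot all_order all_algebra.
From mathcomp Require Import complex.
From mathcomp Require Import ring lra polyrcf.

(* The quartic is negative at 0 and positive far from 0, so it has real roots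
   r1 < 0 < r2; dividing by (X - r1)(X - r2) leaves a real quadratic cofactor.
   The discriminant of the quartic is -(G2^3 - 27 G3^2)^2 / 27 < 0, and it
   factors as (r1 - r2)^2 times the discriminant of the cofactor times a
   square, so the cofactor has negative discriminant, hence a pair of
   non-real conjugate roots. *)

Set Implicit Arguments.
Unset Strict Implicit.
Unset Printing Implicit Defensive.

Import Order.TTheory GRing.Theory Num.Theory.
Local Open Scope ring_scope.

Definition depressed_quartic {R : nzRingType} (a b k : R) : {poly R} :=
  'X^4 + a *: 'X^2 + b *: 'X + k%:P.

Definition depressed_quartic_disc {R : nzRingType} (a b k : R) : R :=
  256 * k ^+ 3 - 128 * a ^+ 2 * k ^+ 2 + 144 * a * b ^+ 2 * k - 27 * b ^+ 4
  + 16 * a ^+ 4 * k - 4 * a ^+ 3 * b ^+ 2.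

Lemma hornerE_depressed_quartic (R : comNzRingType) (a b k x : R) :
  (depressed_quartic a b k).[x] = x ^+ 4 + a * x ^+ 2 + b * x + k.
Proof. by rewrite !hornerE. Qed.

Lemma quartic_depressed (R : fieldType) (G2 G3 : R) :
  quartic G2 G3 = depressed_quartic (- (G2 / 2)) (- G3) (- (G2 ^+ 2 / 48)).
Proof. by rewrite /quartic /depressed_quartic !scaleNr polyCN. Qed.

Lemma depressed_quartic_disc_quartic (R : numFieldType) (G2 G3 : R) :
  depressed_quartic_disc (- (G2 / 2)) (- G3) (- (G2 ^+ 2 / 48)) =
  - ((G2 ^+ 3 - 27 * G3 ^+ 2) ^+ 2 / 27).
Proof. by rewrite /depressed_quartic_disc; field. Qed.

Section RootPair.

Variables (R : fieldType) (a b k r1 r2 : R).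
Hypotheses (r12 : r1 != r2)
  (root_r1 : root (depressed_quartic a b k) r1)
  (root_r2 : root (depressed_quartic a b k) r2).

Let s := r1 + r2.
Let P := r1 * r2.
Let c := s ^+ 2 - P + a.

Lemma depressed_quartic_root_pair_coef : b = P * s - s * c /\ k = P * c.
Proof.
(* Euclidean division by (X - r1)(X - r2) = X^2 - s X + P. *)
have division x : x ^+ 4 + a * x ^+ 2 + b * x + k =
    (x - r1) * (x - r2) * (x ^+ 2 + s * x + c) + (b + s * c - P * s) * x + (k - P * c).
  by rewrite /c /s /P; ring.
have remainder0 r : (r - r1) * (r - r2) = 0 -> root (depressed_quartic a b k) r ->
    (b + s * c - P * s) * r + (k - P * c) = 0.
  by move=> hr /eqP; rewrite hornerE_depressed_quartic division hr mul0r add0r.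
have := remainder0 r1; rewrite subrr mul0r => /(_ erefl root_r1) e1.
have := remainder0 r2; rewrite subrr mulr0 => /(_ erefl root_r2) e2.
have slope0 : b + s * c - P * s = 0.
  have /eqP : (b + s * c - P * s) * (r1 - r2) = 0.
    by rewrite mulrBr; apply/eqP; rewrite subr_eq0 -(inj_eq (addIr (k - P * c))) e1 e2.
  by rewrite mulf_eq0 (subr_eq0 r1) (negPf r12) orbF => /eqP.
move: e1; rewrite slope0 mul0r add0r => /eqP; rewrite subr_eq0 => /eqP ->.
split=> //; apply/eqP; rewrite -subr_eq0 -[X in _ == X]slope0; apply/eqP; ring.
Qed.

Lemma depressed_quartic_root_pair_factor :
  depressed_quartic a b k = ('X - r1%:P) * ('X - r2%:P) * ('X^2 + s%:P * 'X + c%:P).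
Proof.
have [-> ->] := depressed_quartic_root_pair_coef.
rewrite /depressed_quartic -!mul_polyC /c /s /P.
by rewrite !(rmorphB, rmorphD, rmorphM) /=; ring.
Qed.

(* Discriminant of a product of quadratics: disc (X^2 - s X + P) * disc (cofactor)
   * (resultant of the two)^2. *)
Lemma depressed_quartic_disc_root_pair :
  depressed_quartic_disc a b k =
  (r1 - r2) ^+ 2 * (s ^+ 2 - 4 * c) * ((P - c) ^+ 2 + 2 * s ^+ 2 * (P + c)) ^+ 2.
Proof.
have [-> ->] := depressed_quartic_root_pair_coef.
by rewrite /depressed_quartic_disc /c /s /P; ring.
Qed.

End RootPair.

Lemma depressed_quartic_root_pair_cofactor_disc_lt0 (R : realFieldType) (a b k r1 r2 : R) :
  r1 != r2 -> root (depressed_quartic a b k) r1 -> root (depressed_quartic a b k) r2 ->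
  depressed_quartic_disc a b k < 0 ->
  (r1 + r2) ^+ 2 - 4 * ((r1 + r2) ^+ 2 - r1 * r2 + a) < 0.
Proof.
move=> r12 root_r1 root_r2; rewrite (depressed_quartic_disc_root_pair r12 root_r1 root_r2).
apply: contraTT; rewrite -!leNgt => cofactor_ge0.
by rewrite mulr_ge0 ?sqr_ge0 // mulr_ge0 ?sqr_ge0.
Qed.

Lemma gt0_cube_gt_sqr (R : realDomainType) (u v : R) : 0 < u ^+ 3 - 27 * v ^+ 2 -> 0 < u.
Proof.
apply: contraTT; rewrite -!leNgt subr_le0 => u_le0.
have : u ^+ 3 <= 0 by rewrite (exprS _ 2) mulr_le0_ge0 ?sqr_ge0.
by move/le_trans; apply; rewrite mulr_ge0 ?sqr_ge0.
Qed.

Lemma quartic_gt0_far (R : realFieldType) (G2 G3 x : R) :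
  0 < G2 -> 2 + G2 + `|G3| <= `|x| -> 0 < (quartic G2 G3).[x].
Proof.
move=> G2_gt0; set t := `|x| => x_far.
have G3_ge0 := normr_ge0 G3.
have t_ge2 : 2 <= t by lra.
have G2_le_t : G2 <= t by lra.
have G3_le_t : `|G3| <= t by lra.
have t_gt0 : 0 < t by lra.
have Ex4 : x ^+ 4 = t ^+ 4 by rewrite -normrX ger0_norm // exprn_even_ge0.
have Ex2 : x ^+ 2 = t ^+ 2 by rewrite -normrX ger0_norm // sqr_ge0.
have G3x : G3 * x <= `|G3| * t by rewrite -normrM ler_norm.
have t4 : 2 * t ^+ 3 <= t ^+ 4 by rewrite (exprS _ 3) ler_wpM2r ?exprn_ge0 //; lra.
have t3 : 2 * t ^+ 2 <= t ^+ 3 by rewrite (exprS _ 2) ler_wpM2r ?exprn_ge0 //; lra.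
have G2t : G2 * t ^+ 2 <= t ^+ 3 by rewrite (exprS _ 2) ler_wpM2r ?exprn_ge0 //; lra.
have G3t : `|G3| * t <= t ^+ 2 by rewrite expr2 ler_wpM2r //; lra.
have G2sq : G2 ^+ 2 <= t ^+ 2 by rewrite lerXn2r // ?nnegrE; lra.
have t2_gt0 : 0 < t ^+ 2 by rewrite exprn_gt0.
by rewrite quartic_depressed hornerE_depressed_quartic Ex4 Ex2; lra.
Qed.

Lemma quartic_neg_pos_roots (R : rcfType) (G2 G3 : R) : 0 < G2 ->
  exists r1 r2, [/\ r1 < 0, 0 < r2, root (quartic G2 G3) r1 & root (quartic G2 G3) r2].
Proof.
move=> G2_gt0; set M := 2 + G2 + `|G3|.
have M_gt0 : 0 < M by rewrite /M; have := normr_ge0 G3; lra.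
have at0 : (quartic G2 G3).[0] < 0.
  rewrite quartic_depressed hornerE_depressed_quartic !expr0n !mulr0 !add0r oppr_lt0.
  by rewrite divr_gt0 ?exprn_gt0.
have atM : 0 < (quartic G2 G3).[M] by apply: quartic_gt0_far; rewrite ?(gtr0_norm M_gt0).
have atNM : 0 < (quartic G2 G3).[- M] by apply: quartic_gt0_far; rewrite ?normrN ?(gtr0_norm M_gt0).
have [r1 r1_in root_r1] : {r | r \in `]- M, 0[ & root (quartic G2 G3) r}.
  by apply: poly_ivtoo; rewrite ?oppr_le0 ?ltW // pmulr_rlt0.
have [r2 r2_in root_r2] : {r | r \in `]0, M[ & root (quartic G2 G3) r}.
  by apply: poly_ivtoo; rewrite ?ltW // nmulr_rlt0.
move: r1_in r2_in; rewrite !in_itv /= => /andP[_ r1_lt0] /andP[r2_gt0 _].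
by exists r1, r2.
Qed.

Lemma map_quadratic_conjc_factor (R : rcfType) (s c : R) : s ^+ 2 - 4 * c < 0 ->
  exists2 z : R[i], complex.Im z != 0 &
    map_poly (real_complex R) ('X^2 + s%:P * 'X + c%:P) = ('X - z%:P) * ('X - (conjc z)%:P).
Proof.
move=> disc_lt0; set y := Num.sqrt (c - s ^+ 2 / 4).
have y_gt0 : 0 < y by rewrite sqrtr_gt0; lra.
have yy : y * y = c - s ^+ 2 / 4 by rewrite -expr2 sqr_sqrtr //; lra.
set z := ((- (s / 2)) +i* y)%C.
exists z; first by rewrite /= gt_eqF.
have sum_z : z + conjc z = (- s)%:C%C by congr Complex; field.
have prod_z : z * conjc z = c%:C%C.
  congr Complex; last by ring.
  by rewrite (mulrN y) opprK yy; field.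
have -> : ('X - z%:P) * ('X - (conjc z)%:P) = 'X^2 - (z + conjc z)%:P * 'X + (z * conjc z)%:P.
  by rewrite polyCD polyCM; ring.
rewrite sum_z prod_z !rmorphD rmorphM /= map_polyXn map_polyX !map_polyC /=.
by rewrite rmorphN polyCN mulNr opprK.
Qed.

Theorem lemma23 (R : rcfType) (G2 G3 : R) :
  G2 != 0 -> 0 < G2 ^+ 3 - 27%:R * G3 ^+ 2 ->
  exists (r1 r2 : R) (z : R[i]),
    [/\ r1 < 0, 0 < r2, complex.Im z != 0 &
      map_poly (real_complex R) (quartic G2 G3) =
        ('X - (r1%:C)%C%:P) * ('X - (r2%:C)%C%:P) * ('X - z%:P) * ('X - (conjc z)%:P)].
Proof.
(* G2 != 0 is implied by the second hypothesis. *)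
move=> _ cubic_disc_gt0.
have G2_gt0 := gt0_cube_gt_sqr cubic_disc_gt0.
have [r1 [r2 [r1_lt0 r2_gt0]]] := quartic_neg_pos_roots G3 G2_gt0.
rewrite quartic_depressed => root_r1 root_r2.
have r12 : r1 != r2 by rewrite lt_eqF // (lt_trans r1_lt0).
have quartic_disc_lt0 : depressed_quartic_disc (- (G2 / 2)) (- G3) (- (G2 ^+ 2 / 48)) < 0.
  by rewrite depressed_quartic_disc_quartic oppr_lt0 divr_gt0 ?exprn_gt0.
have [z z_nonreal cofactorE] := map_quadratic_conjc_factor
  (depressed_quartic_root_pair_cofactor_disc_lt0 r12 root_r1 root_r2 quartic_disc_lt0).
exists r1, r2, z; split=> //.
by rewrite (depressed_quartic_root_pair_factor r12 root_r1 root_r2) !rmorphM /= cofactorE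
  !rmorphB /= map_polyX !map_polyC mulrA.
Qed.
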